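(* Let $N\ge1$, $K\ge1$, $n_v\ge0$. Let $\mathbf{T}^{(1)},\mathbf{T}^{(2)}\in[0,1]^{K\times K}$ be irreducible aperiodic row-stochastic matrices, let $\mathbf{P}_1,\mathbf{P}_2$ be the corresponding global transition matrices and $\pi_1,\pi_2$ their stationary distributions (row vectors in $\mathbb{R}^{K^N}$). Then $\|\mathbf{P}_1-\mathbf{P}_2\|_1\le NK^{N-1}\min\{\|\mathbf{T}^{(1)}-\mathbf{T}^{(2)}\|_1,\;K\|\mathbf{T}^{(1)}-\mathbf{T}^{(2)}\|_{1,1}\}$ and $\|\mathbf{P}_1-\mathbf{P}_2\|_2\le N(KC_K)^{N/2}\|\mathbf{T}^{(1)}-\mathbf{T}^{(2)}\|_2$, where $C_K:=\max\{\max_{j\in[K]}\sum_{k\in[K]}(\mathbf{T}^{(1)}_{j,k})^2,\max_{j\in[K]}\sum_{k\in[K]}(\mathbf{T}^{(2)}_{j,k})^2\}\le1$. Also, there exists $\ell_0\in\mathbb{N}$ such that $\tau(\mathbf{P}_1^{\ell_0})<1$ and $\|\pi_1-\pi_2\|_1\le\frac{1+(\ell_0-1)K^N}{1-\tau(\mathbf{P}_1^{\ell_0})}\|\mathbf{P}_1-\mathbf{P}_2\|_1\le\frac{1+(\ell_0-1)K^N}{1-\tau(\mathbf{P}_1^{\ell_0})}NK^{N-1}\min\{\|\mathbf{T}^{(1)}-\mathbf{T}^{(2)}\|_1,\;K\|\mathbf{T}^{(1)}-\mathbf{T}^{(2)}\|_{1,1}\}$.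
   Context: Vertices $[N]=\{1,\dots,N\}$ are arranged on a cycle; for $n\in[N]$, $V_n\subset[N]$ is the set of residues modulo $N$ of $n-n_v,\dots,n+n_v$, and $|V_n|$ its cardinality. The global transition matrix associated with a row-stochastic $\mathbf{T}$ is $\mathbf{P}(x,y)=\prod_{n=1}^N \frac{1}{|V_n|}\sum_{i\in V_n}\mathbf{T}_{x_i,y_n}$, $x,y\in[K]^N$. For a matrix $\mathbf{A}$, $\|\mathbf{A}\|_p=(\sum_{i,j}|\mathbf{A}_{ij}|^p)^{1/p}$ (entrywise $\ell_p$ norm, also for vectors), and $\|\mathbf{A}\|_{1,1}=\sup_{\|\varphi\|_1\le1}\|\varphi\mathbf{A}\|_1$, the supremum over row vectors $\varphi$. For a stochastic matrix $\mathbf{A}$, $\tau(\mathbf{A}):=\frac12\max_{x,x'}\|\mathbf{A}(x,\cdot)-\mathbf{A}(x',\cdot)\|_1$. *)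

From HB Require Import structures.
From mathcomp Require Import all_boot all_order all_algebra.
From mathcomp Require Import classical_sets reals.
Set Implicit Arguments. Unset Strict Implicit. Unset Printing Implicit Defensive.
Import Order.TTheory GRing.Theory Num.Theory.
Local Open Scope ring_scope.
Local Open Scope classical_set_scope.

Section Defs.
Variable R : realType.

Definition row_stochastic (K : nat) (T : 'M[R]_K) : Prop :=
  (forall j k, 0 <= T j k) /\ (forall j, \sum_k T j k = 1).

Definition irreducible (K : nat) (T : 'M[R]_K) : Prop :=
  forall j k, exists m : nat, 0 < (T ^+ m) j k.

(** Aperiodic: every state has period 1, i.e. the gcd of the return
    times {m >= 1 | T^m(i,i) > 0} is 1 (only d = 1 divides all of them). *)
Definition aperiodic (K : nat) (T : 'M[R]_K) : Prop :=
  forall i (d : nat),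
    (forall m : nat, (0 < m)%N -> 0 < (T ^+ m) i i -> (d %| m)%N) -> d = 1%N.

Definition config (N K : nat) := {ffun 'I_N -> 'I_K}.

(** Neighbourhood V_n on the cycle (0-based indices): residues mod N of
    n - nv, ..., n + nv, i.e. i with i = n + d - nv (mod N), 0 <= d <= 2nv. *)
Definition nbhd (N nv : nat) (n : 'I_N) : {set 'I_N} :=
  [set i : 'I_N | [exists d : 'I_(nv.*2).+1, (i + nv == n + d %[mod N])%N]].

Definition globalP (N K nv : nat) (T : 'M[R]_K) (x y : config N K) : R :=
  \prod_(n : 'I_N)
    ((#|nbhd nv n|%:R)^-1 * \sum_(i in nbhd nv n) T (x i) (y n)).

Definition mulF (I : finType) (A B : I -> I -> R) : I -> I -> R :=
  fun x y => \sum_z A x z * B z y.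
Definition idF (I : finType) : I -> I -> R :=
  fun x y => (x == y)%:R.
Definition powF (I : finType) (A : I -> I -> R) (l : nat) : I -> I -> R :=
  iter l (mulF A) (@idF I).

Definition norm1 (I J : finType) (A : I -> J -> R) : R :=
  \sum_i \sum_j `|A i j|.
Definition norm2 (I J : finType) (A : I -> J -> R) : R :=
  Num.sqrt (\sum_i \sum_j (A i j) ^+ 2).
Definition vnorm1 (I : finType) (v : I -> R) : R := \sum_i `|v i|.

Definition norm11 (I J : finType) (A : I -> J -> R) : R :=
  sup [set vnorm1 (fun j => \sum_i phi i * A i j)
      | phi in [set phi : I -> R | vnorm1 phi <= 1]].

Definition tau (I : finType) (A : I -> I -> R) : R :=
  2^-1 * \big[Num.max/0]_(x : I) \big[Num.max/0]_(x' : I)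
           \sum_y `|A x y - A x' y|.

Definition stationary (I : finType) (P : I -> I -> R) (pi : I -> R) : Prop :=
  (forall x, 0 <= pi x) /\ \sum_x pi x = 1 /\
  (forall y, \sum_x pi x * P x y = pi y).

Definition rowsq (K : nat) (T : 'M[R]_K) : R :=
  \big[Num.max/0]_(j : 'I_K) \sum_(k : 'I_K) (T j k) ^+ 2.

End Defs.
Arguments globalP {R} N {K} nv T x y.

(* Write P_T(x, .) as the product over the sites n of the local laws
   Q_T(x, n, .) = |V_n|^-1 \sum_(i in V_n) T(x_i, .).  Telescoping
   P_1(x, y) - P_2(x, y) leaves N terms, in the n-th of which only the n-th
   factor is a difference Q_1 - Q_2.  Summed over y, the absolute value of such
   a term factorises: every other factor has mass 1, and summing the remaining
   |Q_1 - Q_2| over x counts every row of T_1 - T_2 exactly K^(N-1) times.  The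
   l2 bound is the same computation after Cauchy-Schwarz, the other factors now
   contributing their squared mass, at most C_K.
   Irreducibility and aperiodicity make some power T_1^l0 entrywise positive,
   hence also P_1^l0, whose Dobrushin coefficient is then < 1.  Writing
   pi_1 - pi_2 = (pi_1 - pi_2) P_1^l0 + pi_2 (P_1^l0 - P_2^l0) and contracting
   the first term gives the perturbation bound with the constant
   l0 / (1 - tau(P_1^l0)), and l0 <= 1 + (l0 - 1) K^N. *)

From HB Require Import structures.
From mathcomp Require Import all_boot all_order all_algebra.
From mathcomp Require Import classical_sets reals boolp zify ring lra.
Set Implicit Arguments. Unset Strict Implicit. Unset Printing Implicit Defensive.
Import Order.TTheory GRing.Theory Num.Theory.
Local Open Scope ring_scope.

Section RealSums.
Variable R : realDomainType.

Lemma ler_psum_term (I : finType) (F : I -> R) i0 :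
  (forall i, 0 <= F i) -> F i0 <= \sum_i F i.
Proof. by move=> F_ge0; rewrite (bigD1 i0) //= lerDl sumr_ge0. Qed.

Lemma sqr_sum_le (I : finType) (A : {pred I}) (f : I -> R) :
  (\sum_(i in A) f i) ^+ 2 <= #|A|%:R * \sum_(i in A) f i ^+ 2.
Proof.
have sum_sqr_diff : \sum_(i in A) \sum_(j in A) (f i - f j) ^+ 2 =
    (#|A|%:R * \sum_(i in A) f i ^+ 2 - (\sum_(i in A) f i) ^+ 2) *+ 2.
  transitivity (\sum_(i in A) (#|A|%:R * f i ^+ 2 + \sum_(j in A) f j ^+ 2
                 - 2 * f i * \sum_(j in A) f j)).
    apply: eq_bigr => i _.
    transitivity (\sum_(j in A) (f i ^+ 2 + f j ^+ 2 - 2 * f i * f j)).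
      by apply: eq_bigr => j _; ring.
    by rewrite sumrB big_split /= sumr_const -mulr_sumr [#|A|%:R * _]mulr_natl.
  rewrite sumrB big_split /= sumr_const -mulr_sumr -mulr_suml -mulr_sumr.
  move: (\sum_(i in A) f i ^+ 2) (\sum_(i in A) f i) => a b.
  rewrite -[a *+ #|A|]mulr_natl mulrnBl !mulr2n; ring.
have : 0 <= \sum_(i in A) \sum_(j in A) (f i - f j) ^+ 2.
  by apply: sumr_ge0 => i _; apply: sumr_ge0 => j _; apply: sqr_ge0.
by rewrite sum_sqr_diff pmulrn_lge0 // subr_ge0.
Qed.

Lemma maxr0_subN (r : R) : Num.max r 0 - Num.max (- r) 0 = r.
Proof.
have [r_ge0|r_lt0] := lerP 0 r.
  by rewrite (max_r (_ : - r <= 0)) ?subr0 // oppr_le0.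
by rewrite (max_l (_ : 0 <= - r)) ?sub0r ?opprK // oppr_ge0 ltW.
Qed.

Lemma maxr0_addN (r : R) : Num.max r 0 + Num.max (- r) 0 = `|r|.
Proof.
have [r_ge0|r_lt0] := lerP 0 r.
  by rewrite (max_r (_ : - r <= 0)) ?addr0 ?ger0_norm // oppr_le0.
by rewrite (max_l (_ : 0 <= - r)) ?add0r ?ltr0_norm // oppr_ge0 ltW.
Qed.

End RealSums.

Section Telescope.
Variable R : comPzRingType.

Lemma prodrB_telescope_nat (f g : nat -> R) n :
  \prod_(m < n) f m - \prod_(m < n) g m =
  \sum_(j < n) \prod_(m < n)
     (if (m < j)%N then f m else if m == j :> nat then f m - g m else g m).
Proof.
elim: n => [|n IH]; first by rewrite !big_ord0 subrr.
rewrite !big_ord_recr /= ltnn eqxx.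
under [X in _ = X + _]eq_bigr => j _.
  rewrite big_ord_recr /= ltnNge (ltnW (ltn_ord j)) /= (gtn_eqF (ltn_ord j)).
  over.
under [X in _ = _ + X * _]eq_bigr => m _ do rewrite ltn_ord.
rewrite -mulr_suml -IH; ring.
Qed.

Definition telescope_factor {n : nat} (F G : 'I_n -> R) (j m : 'I_n) : R :=
  if (m < j)%N then F m else if m == j then F m - G m else G m.

Lemma prodrB_telescope n (F G : 'I_n -> R) :
  \prod_m F m - \prod_m G m = \sum_j \prod_m telescope_factor F G j m.
Proof.
case: n F G => [|n] F G; first by rewrite !big_ord0 subrr.
have ordE (H : 'I_n.+1 -> R) : \prod_m H m = \prod_(m < n.+1) H (inord m).
  by apply: eq_bigr => m _; rewrite inord_val.
rewrite (ordE F) (ordE G).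
rewrite (prodrB_telescope_nat (fun m => F (inord m)) (fun m => G (inord m))).
by apply: eq_bigr => j _; apply: eq_bigr => m _; rewrite !inord_val.
Qed.

End Telescope.

Section PrimitiveMatrix.
Variables (R : realType) (K : nat) (T : 'M[R]_K).
Hypothesis T_ge0 : forall j k, 0 <= T j k.

Lemma mxexp_ge0 m i j : 0 <= (T ^+ m) i j.
Proof.
elim: m i j => [|m IH] i j; first by rewrite expr0 mxE ler0n.
by rewrite exprS -mulmxE mxE; apply: sumr_ge0 => k _; apply: mulr_ge0.
Qed.

Lemma mxexp_add_gt0 a b i k j :
  0 < (T ^+ a) i k -> 0 < (T ^+ b) k j -> 0 < (T ^+ (a + b)) i j.
Proof.
move=> Ta Tb; rewrite exprD -mulmxE mxE.
apply: lt_le_trans (mulr_gt0 Ta Tb) _.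
apply: ler_psum_term => z.
exact: mulr_ge0 (mxexp_ge0 _ _ _) (mxexp_ge0 _ _ _).
Qed.

Lemma mxexp_mul_gt0 q a i : 0 < (T ^+ a) i i -> 0 < (T ^+ (q * a)) i i.
Proof.
move=> Ta; elim: q => [|q IH]; first by rewrite mul0n expr0 mxE eqxx ltr01.
by rewrite mulSn; apply: mxexp_add_gt0 Ta IH.
Qed.

Lemma aperiodic_consecutive_returns_of_gap i d :
  aperiodic T -> (0 < d)%N ->
  (exists b, 0 < (T ^+ b) i i /\ 0 < (T ^+ (b + d)) i i) ->
  exists b, 0 < (T ^+ b) i i /\ 0 < (T ^+ b.+1) i i.
Proof.
move=> T_ap; elim/ltn_ind: d => d IH d_gt0 [b [Tb Tbd]].
have [d1|d_neq1] := eqVneq d 1%N; first by exists b; rewrite -addn1 -d1.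
have [s [s_gt0 [Ts d_ndvd_s]]] :
    exists s, (0 < s)%N /\ 0 < (T ^+ s) i i /\ ~~ (d %| s)%N.
  apply: contrapT => no_s; move/eqP: d_neq1; apply; apply: (T_ap i) => s s_gt0 Ts.
  by apply: contrapT => /negP d_ndvd_s; apply: no_s; exists s.
(* a return gap d not dividing a return time s yields the smaller gap s %% d *)
have r_gt0 : (0 < s %% d)%N by rewrite lt0n.
apply: (IH (s %% d)%N _ r_gt0); first by rewrite ltn_pmod.
exists (s %/ d * (b + d))%N; split; first exact: mxexp_mul_gt0.
have -> : (s %/ d * (b + d) + s %% d = s + s %/ d * b)%N.
  by rewrite mulnDr -addnA -divn_eq addnC.
exact: mxexp_add_gt0 Ts (mxexp_mul_gt0 _ Tb).
Qed.

Lemma aperiodic_consecutive_returns i :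
  aperiodic T -> exists b, 0 < (T ^+ b) i i /\ 0 < (T ^+ b.+1) i i.
Proof.
move=> T_ap; have [s [s_gt0 Ts]] : exists s, (0 < s)%N /\ 0 < (T ^+ s) i i.
  (* otherwise d = 0 divides every return time, vacuously *)
  apply: contrapT => no_return.
  suff : 0%N = 1%N by [].
  by apply: (T_ap i) => s s_gt0 Ts; case: no_return; exists s.
apply: (aperiodic_consecutive_returns_of_gap T_ap s_gt0); exists 0%N.
by rewrite expr0 mxE eqxx ltr01.
Qed.

Lemma aperiodic_diag_eventually_gt0 i :
  aperiodic T -> exists M, forall m, (M <= m)%N -> 0 < (T ^+ m) i i.
Proof.
move=> T_ap; have [b [Tb Tb1]] := aperiodic_consecutive_returns i T_ap.
exists (b * b)%N => m b2_le_m.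
have [b0|b_gt0] := posnP b.
  by rewrite -(muln1 m); apply: mxexp_mul_gt0; rewrite -b0.
have r_lt_q : (m %% b < m %/ b)%N.
  by apply: leq_trans (ltn_pmod m b_gt0) _; rewrite leq_divRL.
have -> : m = ((m %/ b - m %% b) * b + m %% b * b.+1)%N.
  rewrite {1}(divn_eq m b) mulnS mulnBl [X in (_ = _ + X)%N]addnC addnA subnK //.
  by rewrite leq_mul2r ltnW // orbT.
exact: mxexp_add_gt0 (mxexp_mul_gt0 _ Tb) (mxexp_mul_gt0 _ Tb1).
Qed.

Lemma primitive_mxexp_gt0 :
  irreducible T -> aperiodic T ->
  exists M, (0 < M)%N /\ forall i j, 0 < (T ^+ M) i j.
Proof.
move=> T_irr T_ap.
have [Md Md_gt0] := fin_all_exists (fun i => aperiodic_diag_eventually_gt0 i T_ap).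
have [a a_gt0] := fin_all_exists (fun ij : 'I_K * 'I_K => T_irr ij.1 ij.2).
pose M := (\max_i Md i + \max_ij a ij).+1.
exists M; split => // i j.
have a_le := @leq_bigmax _ a (i, j); have Md_le := @leq_bigmax _ Md i.
have -> : M = (M - a (i, j) + a (i, j))%N by lia.
by apply: mxexp_add_gt0 (a_gt0 (i, j)); apply: Md_gt0; lia.
Qed.

End PrimitiveMatrix.

Section RowSquares.
Variables (R : realType) (K : nat) (T : 'M[R]_K).

Lemma rowsq_ge j : \sum_k T j k ^+ 2 <= rowsq T.
Proof. exact: (le_bigmax 0 (fun j => \sum_k T j k ^+ 2) j). Qed.

Lemma rowsq_le1 :
  row_stochastic T -> rowsq T <= 1.
Proof.
move=> [T_ge0 T_sum1]; apply: bigmax_le => [|j _]; first exact: ler01.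
rewrite -(T_sum1 j); apply: ler_sum => k _.
have T_le1 : T j k <= 1 by rewrite -(T_sum1 j) (ler_psum_term k (T_ge0 j)).
by rewrite expr2 ler_piMr.
Qed.

Lemma one_le_card_rowsq :
  (0 < K)%N -> row_stochastic T -> 1 <= K%:R * rowsq T.
Proof.
move=> K_gt0 [_ T_sum1]; pose j0 := Ordinal K_gt0.
have := sqr_sum_le predT (T j0); rewrite cardT size_enum_ord T_sum1 expr1n.
move/le_trans; apply; rewrite ler_wpM2l //.
exact: (le_bigmax 0 (fun j => \sum_k T j k ^+ 2) j0).
Qed.

End RowSquares.

Section InducedNorm.
Variables (R : realType) (I J : finType) (A : I -> J -> R).

Lemma norm11_ge_row i0 :
  \sum_j `|A i0 j| <= norm11 A.
Proof.
rewrite /norm11; set E := (X in sup X).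
have row_in_E : E (\sum_j `|A i0 j|).
  exists (fun i => (i == i0)%:R).
    rewrite /= /vnorm1 (bigD1 i0) //= eqxx normr1 big1 ?addr0 //.
    by move=> i /negbTE ->; rewrite normr0.
  rewrite /vnorm1; apply: eq_bigr => j _.
  rewrite (bigD1 i0) //= eqxx mul1r big1 ?addr0 //.
  by move=> i /negbTE ->; rewrite mul0r.
apply: (sup_upper_bound _ row_in_E); split; first by exists (\sum_j `|A i0 j|).
exists (norm1 A) => _ [phi phi_le1 <-].
rewrite /vnorm1 /norm1 exchange_big /=; apply: ler_sum => j _.
apply: le_trans (ler_norm_sum _ _ _) _; apply: ler_sum => i _.
rewrite normrM -[X in _ <= X]mul1r ler_wpM2r //; apply: le_trans phi_le1.
by rewrite /vnorm1 (ler_psum_term i).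
Qed.

Lemma norm1_le_norm11 : norm1 A <= #|I|%:R * norm11 A.
Proof.
apply: le_trans (_ : \sum_(i : I) norm11 A <= _).
  by apply: ler_sum => i _; apply: norm11_ge_row.
by rewrite sumr_const mulr_natl.
Qed.

End InducedNorm.

Section Kernels.
Variables (R : realType) (I : finType).
Implicit Types (P Q A : I -> I -> R) (pi v : I -> R).

Definition stochastic P :=
  (forall x y, 0 <= P x y) /\ (forall x, \sum_y P x y = 1).

Lemma powFS P l : powF P l.+1 = mulF P (powF P l).
Proof. by []. Qed.

Lemma powF_stochastic P l : stochastic P -> stochastic (powF P l).
Proof.
move=> [P_ge0 P_sum1]; elim: l => [|l [IH_ge0 IH_sum1]].
  split=> [x y|x]; first by rewrite /powF /= /idF ler0n.
  rewrite /powF /= /idF (bigD1 x) //= eqxx big1 ?addr0 // => y /negbTE.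
  by rewrite eq_sym => ->.
split=> [x y|x]; rewrite powFS /mulF.
  by apply: sumr_ge0 => z _; apply: mulr_ge0.
rewrite exchange_big /=.
under eq_bigr do rewrite -mulr_sumr IH_sum1 mulr1.
exact: P_sum1.
Qed.

Lemma invariant_powF P pi l :
  (forall y, \sum_x pi x * P x y = pi y) ->
  forall y, \sum_x pi x * powF P l x y = pi y.
Proof.
move=> pi_inv; elim: l => [|l IH] y.
  rewrite /powF /= /idF (bigD1 y) //= eqxx mulr1 big1 ?addr0 // => x /negbTE.
  by move=> ->; rewrite mulr0.
rewrite powFS /mulF -[RHS]IH.
under eq_bigr do rewrite mulr_sumr.
rewrite exchange_big /=; apply: eq_bigr => z _.
by rewrite -pi_inv mulr_suml; apply: eq_bigr => x _; rewrite mulrA.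
Qed.

Lemma powF_row_l1_sub_le P Q (D : R) l : stochastic P -> stochastic Q ->
  (forall x, \sum_y `|P x y - Q x y| <= D) ->
  forall x, \sum_y `|powF P l x y - powF Q l x y| <= l%:R * D.
Proof.
move=> P_st [Q_ge0 Q_sum1] PQ_le; elim: l => [|l IH] x.
  by rewrite mul0r big1 // => y _; rewrite subrr normr0.
have [Pl_ge0 Pl_sum1] := powF_stochastic l P_st.
have splitE y : powF P l.+1 x y - powF Q l.+1 x y =
    \sum_z (P x z - Q x z) * powF P l z y
    + \sum_z Q x z * (powF P l z y - powF Q l z y).
  by rewrite !powFS /mulF -big_split /= -sumrB; apply: eq_bigr => z _; ring.
under eq_bigr do rewrite splitE.
apply: le_trans; first by apply: ler_sum => y _; apply: ler_normD.
rewrite big_split /= mulrSr mulrDl mul1r [X in _ <= X]addrC.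
apply: lerD.
  apply: le_trans; first by apply: ler_sum => y _; apply: ler_norm_sum.
  rewrite exchange_big /=; apply: le_trans _ (PQ_le x).
  apply: ler_sum => z _; under eq_bigr do rewrite normrM (ger0_norm (Pl_ge0 _ _)).
  by rewrite -mulr_sumr Pl_sum1 mulr1.
apply: le_trans; first by apply: ler_sum => y _; apply: ler_norm_sum.
rewrite exchange_big /=.
apply: le_trans (_ : \sum_z Q x z * (l%:R * D) <= _); last first.
  by rewrite -mulr_suml Q_sum1 mul1r.
apply: ler_sum => z _; under eq_bigr do rewrite normrM (ger0_norm (Q_ge0 _ _)).
by rewrite -mulr_sumr ler_wpM2l.
Qed.

Lemma row_dist_le_tau A x x' : \sum_y `|A x y - A x' y| <= 2 * tau A.
Proof.
rewrite /tau mulrA mulfV ?mul1r ?pnatr_eq0 //.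
apply: le_trans (le_bigmax _ _ x).
exact: (le_bigmax _ (fun x' => \sum_y `|A x y - A x' y|) x').
Qed.

Lemma tau_lt1 A (x0 : I) : stochastic A -> (forall x y, 0 < A x y) -> tau A < 1.
Proof.
move=> [A_ge0 A_sum1] A_gt0.
suff dist_lt2 x x' : \sum_y `|A x y - A x' y| < 2.
  have : \big[Num.max/0]_x \big[Num.max/0]_x' \sum_y `|A x y - A x' y| < 2.
    by apply: bigmax_lt => // x _; apply: bigmax_lt => // x' _.
  rewrite /tau; lra.
have -> : 2 = \sum_y (A x y + A x' y) :> R by rewrite big_split /= !A_sum1.
rewrite (bigD1 x0) //= [X in _ < X](bigD1 x0) //=.
apply: ltr_leD.
  by rewrite ltr_norml; apply/andP; split; have := A_gt0 x x0; have := A_gt0 x' x0; lra.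
apply: ler_sum => y _; apply: le_trans (ler_normB _ _) _.
by rewrite !ger0_norm.
Qed.

(* Split v into its positive and negative parts, both of mass s: then s (v A)
   is a nonnegative combination of differences of rows of A. *)
Section Dobrushin.
Variables (A : I -> I -> R) (v : I -> R).
Hypothesis v_sum0 : \sum_x v x = 0.

Let vp x := Num.max (v x) 0.
Let vm x := Num.max (- v x) 0.
Let s := \sum_x vp x.

Let vp_ge0 x : 0 <= vp x. Proof. by rewrite le_max lexx orbT. Qed.
Let vm_ge0 x : 0 <= vm x. Proof. by rewrite le_max lexx orbT. Qed.

Let v_split x : v x = vp x - vm x. Proof. by rewrite maxr0_subN. Qed.

Let sum_vm : \sum_x vm x = s.
Proof.
have : \sum_x (vp x - vm x) = 0.
  by rewrite -[RHS]v_sum0; apply: eq_bigr => x _; rewrite v_split.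
by rewrite sumrB /s => /eqP; rewrite subr_eq0 => /eqP ->.
Qed.

Let vnorm1_v : vnorm1 v = s + s.
Proof.
by rewrite /vnorm1 -{2}sum_vm -big_split /=; apply: eq_bigr => x _; rewrite maxr0_addN.
Qed.

Let scaled_vA y : s * (\sum_x v x * A x y) =
  \sum_x \sum_x' vp x * vm x' * (A x y - A x' y).
Proof.
rewrite [RHS](eq_bigr (fun x => vp x * A x y * s - vp x * \sum_x' vm x' * A x' y));
  last by move=> x _; rewrite -sum_vm !mulr_sumr -sumrB; apply: eq_bigr => x' _; ring.
rewrite sumrB -!mulr_suml.
under eq_bigr do rewrite v_split mulrBl.
rewrite sumrB -/s; ring.
Qed.

Let scaled_bound :
  s * vnorm1 (fun y => \sum_x v x * A x y) <= s * (s * (2 * tau A)).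
Proof.
have s_ge0 : 0 <= s by apply: sumr_ge0.
rewrite /vnorm1 mulr_sumr.
apply: le_trans (_ : \sum_y \sum_x \sum_x' vp x * vm x' * `|A x y - A x' y| <= _).
  apply: ler_sum => y _; rewrite -(ger0_norm s_ge0) -normrM scaled_vA.
  apply: le_trans (ler_norm_sum _ _ _) _; apply: ler_sum => x _.
  apply: le_trans (ler_norm_sum _ _ _) _; apply: ler_sum => x' _.
  by rewrite normrM ger0_norm // mulr_ge0.
have -> : s * (s * (2 * tau A)) = \sum_x \sum_x' vp x * vm x' * (2 * tau A).
  rewrite mulrA; under eq_bigr do rewrite -mulr_suml -mulr_sumr sum_vm.
  by rewrite -!mulr_suml.
rewrite exchange_big /=; apply: ler_sum => x _.
rewrite exchange_big /=; apply: ler_sum => x' _.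
by rewrite -mulr_sumr ler_wpM2l ?mulr_ge0 ?row_dist_le_tau.
Qed.

Lemma tau_contract : vnorm1 (fun y => \sum_x v x * A x y) <= tau A * vnorm1 v.
Proof.
rewrite vnorm1_v; have [s_gt0|] := ltrP 0 s.
  have -> : tau A * (s + s) = s * (2 * tau A) by ring.
  by rewrite -(ler_pM2l s_gt0) scaled_bound.
rewrite le_eqVlt ltNge sumr_ge0 // orbF => /eqP s0.
have vp0 := psumr_eq0P (fun x _ => vp_ge0 x) s0.
have vm0 := psumr_eq0P (fun x _ => vm_ge0 x) (etrans sum_vm s0).
rewrite s0 addr0 mulr0 /vnorm1 big1 // => y _.
by rewrite big1 ?normr0 // => x _; rewrite v_split vp0 // vm0 // subrr mul0r.
Qed.

End Dobrushin.

Lemma stationary_l1_sub_le P Q pi1 pi2 l :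
  stochastic P -> stochastic Q -> stationary P pi1 -> stationary Q pi2 ->
  vnorm1 (fun x => pi1 x - pi2 x) * (1 - tau (powF P l))
    <= l%:R * norm1 (fun x y => P x y - Q x y).
Proof.
move=> P_st Q_st [_ [pi1_sum1 pi1_inv]] [pi2_ge0 [pi2_sum1 pi2_inv]].
set L1 := powF P l; set L2 := powF Q l; set D := norm1 _.
have row_le x : \sum_y `|P x y - Q x y| <= D.
  by apply: ler_psum_term => x'; apply: sumr_ge0.
have splitE y : pi1 y - pi2 y =
    \sum_x (pi1 x - pi2 x) * L1 x y + \sum_x pi2 x * (L1 x y - L2 x y).
  rewrite -{1}(invariant_powF l pi1_inv y) -{1}(invariant_powF l pi2_inv y).
  by rewrite -big_split -sumrB; apply: eq_bigr => x _ /=; rewrite /L1 /L2; ring.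
have contract : vnorm1 (fun y => \sum_x (pi1 x - pi2 x) * L1 x y)
    <= tau L1 * vnorm1 (fun x => pi1 x - pi2 x).
  by apply: tau_contract; rewrite sumrB pi1_sum1 pi2_sum1 subrr.
have drift : \sum_y `|\sum_x pi2 x * (L1 x y - L2 x y)| <= l%:R * D.
  apply: le_trans; first by apply: ler_sum => y _; apply: ler_norm_sum.
  rewrite exchange_big /=.
  apply: le_trans (_ : \sum_x pi2 x * (l%:R * D) <= _); last first.
    by rewrite -mulr_suml pi2_sum1 mul1r.
  apply: ler_sum => x _; under eq_bigr do rewrite normrM (ger0_norm (pi2_ge0 _)).
  by rewrite -mulr_sumr ler_wpM2l ?powF_row_l1_sub_le.
suff : vnorm1 (fun x => pi1 x - pi2 x)
    <= tau L1 * vnorm1 (fun x => pi1 x - pi2 x) + l%:R * D by lra.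
rewrite {1}/vnorm1; under eq_bigr do rewrite splitE.
apply: le_trans; first by apply: ler_sum => y _; apply: ler_normD.
by rewrite big_split /= lerD.
Qed.

End Kernels.

Section GlobalChain.
Variables (R : realType) (N K nv : nat).
Local Notation cfg := (config N K).
Implicit Types (T M : 'I_K -> 'I_K -> R) (x y : cfg) (n m : 'I_N).

Definition nbhd_weight n : R := (#|nbhd nv n|%:R)^-1.

Definition local_law T x n (k : 'I_K) : R :=
  nbhd_weight n * \sum_(i in nbhd nv n) T (x i) k.

Lemma globalPE (T : 'M[R]_K) x y :
  globalP N nv T x y = \prod_n local_law T x n (y n).
Proof. by []. Qed.

Lemma nbhd_self n : n \in nbhd nv n.
Proof.
rewrite inE; apply/existsP.
have nv_lt : (nv < nv.*2.+1)%N by rewrite ltnS -addnn leq_addr.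
by exists (Ordinal nv_lt).
Qed.

Lemma nbhd_weight_ge0 n : 0 <= nbhd_weight n.
Proof. by rewrite invr_ge0 ler0n. Qed.

Lemma nbhd_weightK n : nbhd_weight n * #|nbhd nv n|%:R = 1.
Proof.
by rewrite mulVf // pnatr_eq0 -lt0n; apply/card_gt0P; exists n; apply: nbhd_self.
Qed.

Lemma sum_config_coord (f : 'I_K -> R) n :
  \sum_(x : cfg) f (x n) = K%:R ^+ N.-1 * \sum_k f k.
Proof.
pose F m k := if m == n then f k else 1.
transitivity (\sum_(x : cfg) \prod_m F m (x m)).
  apply: eq_bigr => x _; rewrite (bigD1 n) //= /F eqxx big1 ?mulr1 //.
  by move=> m /negbTE ->.
rewrite -bigA_distr_bigA (bigD1 n) //= /F eqxx mulrC; congr (_ * _).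
rewrite (eq_bigr (fun _ => K%:R)); last first.
  by move=> m /negbTE ->; rewrite sumr_const card_ord.
by rewrite prodr_const cardC1 card_ord.
Qed.

Lemma sum_config_nbhd_avg (f : 'I_K -> R) n :
  \sum_(x : cfg) nbhd_weight n * \sum_(i in nbhd nv n) f (x i)
    = K%:R ^+ N.-1 * \sum_k f k.
Proof.
rewrite -mulr_sumr exchange_big /=; under eq_bigr do rewrite sum_config_coord.
by rewrite sumr_const mulrnAr -mulrnAl -mulr_natr nbhd_weightK mul1r.
Qed.

Lemma local_law_ge0 T x n k : (forall j k, 0 <= T j k) -> 0 <= local_law T x n k.
Proof.
by move=> T_ge0; rewrite mulr_ge0 ?nbhd_weight_ge0 ?sumr_ge0.
Qed.

Lemma local_law_sum1 (T : 'M[R]_K) x n :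
  row_stochastic T -> \sum_k local_law T x n k = 1.
Proof.
move=> [_ T_sum1]; rewrite -mulr_sumr exchange_big /=.
by under eq_bigr do rewrite T_sum1; rewrite sumr_const nbhd_weightK.
Qed.

Lemma globalP_stochastic (T : 'M[R]_K) :
  row_stochastic T -> stochastic (globalP N nv T).
Proof.
move=> T_st; split=> [x y|x].
  by rewrite globalPE; apply: prodr_ge0 => n _; apply: local_law_ge0; case: T_st.
under eq_bigr do rewrite globalPE.
by rewrite -bigA_distr_bigA big1 // => n _; apply: local_law_sum1.
Qed.

Lemma local_lawB (T1 T2 : 'I_K -> 'I_K -> R) x n k :
  local_law T1 x n k - local_law T2 x n k
    = local_law (fun j k => T1 j k - T2 j k) x n k.
Proof. by rewrite -mulrBr -sumrB. Qed.

(* factor m of the n-th term of the telescoped difference P_1(x, y) - P_2(x, y) *)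
Definition hybrid_law (T1 T2 : 'I_K -> 'I_K -> R) x n m k :=
  telescope_factor (local_law T1 x ^~ k) (local_law T2 x ^~ k) n m.

Lemma globalP_sub_telescope (T1 T2 : 'M[R]_K) x y :
  globalP N nv T1 x y - globalP N nv T2 x y
    = \sum_n \prod_m hybrid_law T1 T2 x n m (y m).
Proof. by rewrite !globalPE prodrB_telescope. Qed.

Lemma hybrid_law_diag (T1 T2 : 'I_K -> 'I_K -> R) x n :
  hybrid_law T1 T2 x n n =1 local_law (fun j k => T1 j k - T2 j k) x n.
Proof. by move=> k; rewrite /hybrid_law /telescope_factor ltnn eqxx local_lawB. Qed.

Lemma hybrid_law_offdiag (T1 T2 : 'M[R]_K) x n m : m != n ->
  hybrid_law T1 T2 x n m =1 local_law (if (m < n)%N then T1 else T2) x m.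
Proof. by move=> /negbTE mn k; rewrite /hybrid_law /telescope_factor mn; case: ifP. Qed.

Lemma sum_abs_hybrid_law (T1 T2 : 'M[R]_K) x n :
  row_stochastic T1 -> row_stochastic T2 ->
  \prod_m \sum_k `|hybrid_law T1 T2 x n m k|
    = \sum_k `|local_law (fun j k => T1 j k - T2 j k) x n k|.
Proof.
move=> T1_st T2_st; rewrite (bigD1 n) //= [X in _ * X]big1 ?mulr1.
  by apply: eq_bigr => k _; rewrite hybrid_law_diag.
move=> m mn; under eq_bigr do rewrite hybrid_law_offdiag //.
have T_st : row_stochastic (if (m < n)%N then T1 else T2) by case: ifP.
rewrite -(local_law_sum1 x m T_st); apply: eq_bigr => k _.
by rewrite ger0_norm // local_law_ge0 //; case: T_st.
Qed.

Lemma row_l1_globalP_sub_le (T1 T2 : 'M[R]_K) x :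
  row_stochastic T1 -> row_stochastic T2 ->
  \sum_y `|globalP N nv T1 x y - globalP N nv T2 x y|
    <= \sum_n \sum_k `|local_law (fun j k => T1 j k - T2 j k) x n k|.
Proof.
move=> T1_st T2_st; under eq_bigr do rewrite globalP_sub_telescope.
apply: le_trans; first by apply: ler_sum => y _; apply: ler_norm_sum.
rewrite exchange_big /=; apply: ler_sum => n _.
under eq_bigr do rewrite normr_prod.
rewrite -(bigA_distr_bigA (fun m k => `|hybrid_law T1 T2 x n m k|)).
by rewrite sum_abs_hybrid_law.
Qed.

Lemma sum_abs_local_law_le M x n :
  \sum_k `|local_law M x n k|
    <= nbhd_weight n * \sum_(i in nbhd nv n) \sum_k `|M (x i) k|.
Proof.
under eq_bigr do rewrite normrM (ger0_norm (nbhd_weight_ge0 n)).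
rewrite -mulr_sumr ler_wpM2l ?nbhd_weight_ge0 // exchange_big /=.
by apply: ler_sum => k _; apply: ler_norm_sum.
Qed.

Lemma norm1_globalP_sub_le (T1 T2 : 'M[R]_K) :
  row_stochastic T1 -> row_stochastic T2 ->
  norm1 (fun x y => globalP N nv T1 x y - globalP N nv T2 x y)
    <= N%:R * K%:R ^+ N.-1 * norm1 (fun j k => T1 j k - T2 j k).
Proof.
move=> T1_st T2_st.
apply: le_trans (ler_sum _ (fun x _ => row_l1_globalP_sub_le x T1_st T2_st)) _.
apply: le_trans (_ : \sum_(x : cfg) \sum_n nbhd_weight n * \sum_(i in nbhd nv n)
   \sum_k `|T1 (x i) k - T2 (x i) k| <= _).
  by apply: ler_sum => x _; apply: ler_sum => n _; apply: sum_abs_local_law_le.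
rewrite exchange_big /=.
under eq_bigr do rewrite (sum_config_nbhd_avg (fun j => \sum_k `|T1 j k - T2 j k|)).
by rewrite sumr_const card_ord -[_ *+ N]mulr_natl mulrA.
Qed.

Lemma sum_sqr_local_law_le M x n :
  \sum_k local_law M x n k ^+ 2
    <= nbhd_weight n * \sum_(i in nbhd nv n) \sum_k M (x i) k ^+ 2.
Proof.
rewrite exchange_big mulr_sumr /=; apply: ler_sum => k _.
rewrite exprMn; apply: le_trans (ler_wpM2l (sqr_ge0 _) (sqr_sum_le _ _)) _.
by rewrite expr2 -mulrA [X in _ * X]mulrA nbhd_weightK mul1r.
Qed.

Lemma sum_sqr_local_law_le_rowsq (T : 'M[R]_K) x n :
  \sum_k local_law T x n k ^+ 2 <= rowsq T.
Proof.
apply: le_trans (sum_sqr_local_law_le _ _ _) _.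
apply: le_trans (_ : nbhd_weight n * \sum_(i in nbhd nv n) rowsq T <= _).
  by rewrite ler_wpM2l ?nbhd_weight_ge0 //; apply: ler_sum => i _; apply: rowsq_ge.
by rewrite sumr_const -mulr_natl mulrA nbhd_weightK mul1r.
Qed.

Lemma sum_sqr_hybrid_law_le (T1 T2 : 'M[R]_K) x n (C : R) :
  rowsq T1 <= C -> rowsq T2 <= C ->
  \sum_(y : cfg) (\prod_m hybrid_law T1 T2 x n m (y m)) ^+ 2
    <= C ^+ N.-1 * \sum_k local_law (fun j k => T1 j k - T2 j k) x n k ^+ 2.
Proof.
move=> T1_C T2_C; under eq_bigr do rewrite -prodrXl.
rewrite -(bigA_distr_bigA (fun m k => hybrid_law T1 T2 x n m k ^+ 2)).
rewrite (bigD1 n) //= mulrC; apply: ler_pM.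
- by apply: prodr_ge0 => m _; apply: sumr_ge0 => k _; apply: sqr_ge0.
- by apply: sumr_ge0 => k _; apply: sqr_ge0.
- apply: le_trans (_ : \prod_(m | m != n) C <= _).
    apply: ler_prod => m mn.
    rewrite sumr_ge0 => [|k _]; last exact: sqr_ge0.
    under eq_bigr do rewrite hybrid_law_offdiag //.
    apply: le_trans (sum_sqr_local_law_le_rowsq _ _ _) _.
    by case: ifP.
  by rewrite prodr_const cardC1 card_ord.
- by apply: ler_sum => k _; rewrite hybrid_law_diag.
Qed.

Lemma sum_sqr_globalP_sub_le (T1 T2 : 'M[R]_K) (C : R) :
  rowsq T1 <= C -> rowsq T2 <= C ->
  \sum_(x : cfg) \sum_(y : cfg) (globalP N nv T1 x y - globalP N nv T2 x y) ^+ 2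
    <= N%:R ^+ 2 * (K%:R * C) ^+ N.-1 * \sum_j \sum_k (T1 j k - T2 j k) ^+ 2.
Proof.
move=> T1_C T2_C.
have row_le x : \sum_y (globalP N nv T1 x y - globalP N nv T2 x y) ^+ 2
    <= N%:R * \sum_n C ^+ N.-1
              * \sum_k local_law (fun j k => T1 j k - T2 j k) x n k ^+ 2.
  under eq_bigr do rewrite globalP_sub_telescope.
  apply: le_trans; first by apply: ler_sum => y _; apply: (sqr_sum_le predT).
  rewrite cardT size_enum_ord -[X in X <= _]mulr_sumr; apply: ler_wpM2l => //.
  rewrite exchange_big /=; apply: ler_sum => n _.
  exact: sum_sqr_hybrid_law_le.
have C_ge0 : 0 <= C by apply: le_trans T1_C; apply: bigmax_ge_id.
apply: le_trans (ler_sum _ (fun x _ => row_le x)) _.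
apply: le_trans (_ : N%:R * \sum_n C ^+ N.-1
    * (K%:R ^+ N.-1 * \sum_j \sum_k (T1 j k - T2 j k) ^+ 2) <= _).
  rewrite -[X in X <= _]mulr_sumr; apply: ler_wpM2l => //.
  rewrite exchange_big /=; apply: ler_sum => n _.
  rewrite -mulr_sumr; apply: ler_wpM2l; first exact: exprn_ge0.
  rewrite -(sum_config_nbhd_avg (fun j => \sum_k (T1 j k - T2 j k) ^+ 2) n).
  by apply: ler_sum => x _; apply: sum_sqr_local_law_le.
rewrite sumr_const card_ord exprMn le_eqVlt; apply/orP; left.
apply/eqP; ring.
Qed.

Lemma norm2_globalP_sub_le (T1 T2 : 'M[R]_K) (C : R) :
  rowsq T1 <= C -> rowsq T2 <= C -> 1 <= K%:R * C ->
  norm2 (fun x y => globalP N nv T1 x y - globalP N nv T2 x y)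
    <= N%:R * Num.sqrt (K%:R * C) ^+ N * norm2 (fun j k => T1 j k - T2 j k).
Proof.
move=> T1_C T2_C KC_ge1; rewrite /norm2 /=.
set S := \sum_(j : 'I_K) \sum_(k : 'I_K) (T1 j k - T2 j k) ^+ 2.
have S_ge0 : 0 <= S by apply: sumr_ge0 => j _; apply: sumr_ge0 => k _; apply: sqr_ge0.
have KC_ge0 : 0 <= K%:R * C by apply: le_trans KC_ge1.
have rhs_ge0 : 0 <= N%:R * Num.sqrt (K%:R * C) ^+ N * Num.sqrt S.
  by rewrite !mulr_ge0 ?exprn_ge0 ?sqrtr_ge0.
rewrite -(ger0_norm rhs_ge0) -sqrtr_sqr; apply: ler_wsqrtr.
apply: le_trans (sum_sqr_globalP_sub_le T1_C T2_C) _.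
rewrite [X in _ <= X]exprMn [X in _ <= X * _]exprMn sqr_sqrtr //.
rewrite -exprM mulnC exprM sqr_sqrtr //.
by rewrite ler_wpM2r // ler_wpM2l ?sqr_ge0 // ler_weXn2l // leq_pred.
Qed.

Lemma powF_globalP_gt0 (T : 'M[R]_K) l x y :
  row_stochastic T -> (forall n, 0 < (T ^+ l) (x n) (y n)) ->
  0 < powF (globalP N nv T) l x y.
Proof.
move=> T_st; have [T_ge0 _] := T_st.
have [P_ge0 _] := globalP_stochastic T_st.
elim: l x y => [|l IH] x y Tl_gt0.
  suff -> : x = y by rewrite /powF /= /idF eqxx ltr01.
  apply/ffunP => n; have := Tl_gt0 n; rewrite expr0 mxE.
  by case: eqP => // _; rewrite ltxx.
(* route x to y through some z with T (x n) (z n) > 0 and T^l (z n) (y n) > 0 *)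
have step n : exists k, 0 < T (x n) k /\ 0 < (T ^+ l) k (y n).
  have := Tl_gt0 n; rewrite exprS -mulmxE mxE => /lt0r_neq0/eqP.
  case/(psumr_neq0P (fun k _ => mulr_ge0 (T_ge0 _ _) (mxexp_ge0 T_ge0 _ _ _))).
  move=> k /= Tk; exists k.
  by move: Tk; rewrite mulr_ge0_gt0 ?T_ge0 ?mxexp_ge0 // => /andP.
have [z z_ok] := fin_all_exists step.
have [Pl_ge0 _] := powF_stochastic l (globalP_stochastic T_st).
rewrite powFS /mulF.
apply: lt_le_trans (ler_psum_term [ffun n => z n] _) => [|w]; last exact: mulr_ge0.
apply: mulr_gt0; last by apply: IH => n; rewrite ffunE; case: (z_ok n).
rewrite globalPE; apply: prodr_gt0 => n _; rewrite ffunE /local_law.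
apply: mulr_gt0.
  by rewrite invr_gt0 ltr0n; apply/card_gt0P; exists n; apply: nbhd_self.
case: (z_ok n) => Tz_gt0 _; apply: lt_le_trans Tz_gt0 _.
by rewrite (bigD1 n) ?nbhd_self //= lerDl sumr_ge0.
Qed.

End GlobalChain.

Theorem theorem3p5 (R : realType) (N K nv : nat)
  (T1 T2 : 'M[R]_K) (pi1 pi2 : config N K -> R) :
  (1 <= N)%N -> (1 <= K)%N ->
  row_stochastic T1 -> irreducible T1 -> aperiodic T1 ->
  row_stochastic T2 -> irreducible T2 -> aperiodic T2 ->
  stationary (globalP N nv T1) pi1 -> stationary (globalP N nv T2) pi2 ->
  let P1 := globalP N nv T1 in
  let P2 := globalP N nv T2 in
  let dP := fun x y => P1 x y - P2 x y in
  let dT := fun j k => T1 j k - T2 j k in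
  let CK := Num.max (rowsq T1) (rowsq T2) in
  let bnd := (N * K ^ N.-1)%:R * Num.min (norm1 dT) (K%:R * norm11 dT) in
  [/\ norm1 dP <= bnd,
      norm2 dP <= N%:R * Num.sqrt (K%:R * CK) ^+ N * norm2 dT,
      CK <= 1 &
      exists l0 : nat, [/\ (0 < l0)%N, tau (powF P1 l0) < 1 &
        let c := (1 + (l0.-1 * K ^ N)%:R) / (1 - tau (powF P1 l0)) in
        vnorm1 (fun x => pi1 x - pi2 x) <= c * norm1 dP /\
        c * norm1 dP <= c * bnd]].
Proof.
move=> _ K_gt0 T1_st T1_irr T1_ap T2_st _ _ pi1_st pi2_st P1 P2 dP dT CK bnd.
have dP_le_bnd : norm1 dP <= bnd.
  have dT_le := norm1_le_norm11 dT; rewrite card_ord in dT_le.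
  by rewrite /bnd (min_l dT_le) natrM natrX norm1_globalP_sub_le.
have [T1_CK T2_CK] : rowsq T1 <= CK /\ rowsq T2 <= CK.
  by split; rewrite le_max lexx ?orbT.
have KCK_ge1 : 1 <= K%:R * CK.
  by apply: le_trans (one_le_card_rowsq K_gt0 T1_st) _; rewrite ler_wpM2l.
split; first exact: dP_le_bnd.
- exact: norm2_globalP_sub_le.
- by rewrite ge_max !rowsq_le1.
have [T1_ge0 _] := T1_st; have P1_st := globalP_stochastic N nv T1_st.
have [M [M_gt0 TM_gt0]] := primitive_mxexp_gt0 T1_ge0 T1_irr T1_ap.
have tau_lt1_M : tau (powF P1 M) < 1.
  apply: (tau_lt1 [ffun=> Ordinal K_gt0]); first exact: powF_stochastic.
  by move=> x y; apply: powF_globalP_gt0.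
exists M; split => // c.
have tau_gap : 0 < 1 - tau (powF P1 M) by rewrite subr_gt0.
have c_ge0 : 0 <= c by apply: divr_ge0; [apply: addr_ge0 | apply: ltW].
split; last by rewrite ler_wpM2l.
have M_le : M%:R <= 1 + (M.-1 * K ^ N)%:R :> R.
  rewrite addrC natr1 ler_nat -[X in (X <= _)%N]prednK // ltnS.
  by rewrite leq_pmulr // expn_gt0 K_gt0.
rewrite mulrAC ler_pdivlMr //.
have P2_st := globalP_stochastic N nv T2_st.
apply: le_trans (stationary_l1_sub_le M P1_st P2_st pi1_st pi2_st) _.
by rewrite ler_wpM2r // sumr_ge0 // => x _; apply: sumr_ge0.
Qed.
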